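(* Let $n\ge2$, $\alpha\in(-n,0)$ and let $\phi$ be a Young function. For any domain $\Omega\subset\mathbb R^n$, we have $\mathbf B^{\alpha,\phi}(\Omega)\subset\dot{\mathbf B}^{\alpha,\phi}(\Omega)\subset L^1_{\mathrm{loc}}(\Omega)$ as sets.
   Context: A Young function is $\phi\in C([0,\infty))$, convex, with $\phi(0)=0$, $\phi(t)>0$ for $t>0$, $\lim_{t\to\infty}\phi(t)=\infty$. $\dot{\mathbf B}^{\alpha,\phi}(\Omega)$ is the space of measurable $u$ on $\Omega$ with finite $\|u\|_{\dot{\mathbf B}^{\alpha,\phi}(\Omega)}:=\inf\{\lambda>0:\int_\Omega\int_\Omega\phi(\frac{|u(x)-u(y)|}{\lambda|x-y|^{\alpha}})\frac{dx\,dy}{|x-y|^{2n}}\le1\}$. $L^\phi(\Omega)$ consists of measurable $u$ with $\|u\|_{L^\phi(\Omega)}:=\inf\{\lambda>0:\int_\Omega\phi(|u|/\lambda)\,dx\le1\}<\infty$, and $\mathbf B^{\alpha,\phi}(\Omega):=L^\phi(\Omega)\cap\dot{\mathbf B}^{\alpha,\phi}(\Omega)$. *)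

From HB Require Import structures.
From mathcomp Require Import all_boot all_order all_algebra.
From mathcomp Require Import all_classical all_reals all_analysis.
Set Implicit Arguments. Unset Strict Implicit. Unset Printing Implicit Defensive.
Import Order.TTheory GRing.Theory Num.Theory.
Import numFieldNormedType.Exports.
Local Open Scope classical_set_scope.
Local Open Scope ring_scope.

(* Points of R^n are n-tuples of reals (equipped by MathComp-Analysis with the
   product = Borel sigma-algebra). *)

Section Defs.
Variables (R : realType) (n : nat).

Definition edist (x y : n.-tuple R) : R :=
  Num.sqrt (\sum_(i < n) (tnth x i - tnth y i) ^+ 2).

(* identification of n-tuples with row vectors, to use the library topology *)
Definition rowv (x : n.-tuple R) : 'rV[R]_n := \row_i tnth x i.

Definition is_domain (O : set (n.-tuple R)) : Prop :=
  O !=set0 /\ open (rowv @` O) /\ connected (rowv @` O).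

Definition is_compact (K : set (n.-tuple R)) : Prop := compact (rowv @` K).

Definition box (a b : n.-tuple R) : set (n.-tuple R) :=
  [set x | forall i : 'I_n, tnth a i <= tnth x i <= tnth b i].

(* lebn is (the) Lebesgue measure on the Borel sets of R^n: it gives every box
   its volume (this characterizes it uniquely). *)
Definition is_lebesgue_borel (lebn : {measure set (n.-tuple R) -> \bar R}) :=
  forall a b : n.-tuple R, (forall i, tnth a i <= tnth b i) ->
    lebn (box a b) = (\prod_(i < n) (tnth b i - tnth a i))%:E.

Definition LebT (lebn : {measure set (n.-tuple R) -> \bar R}) :=
  caratheodory_type (mu_ext lebn).

Definition Leb (lebn : {measure set (n.-tuple R) -> \bar R}) :=
  @completed_measure_extension _ _ _ lebn.

Definition young (phi : R -> R) : Prop :=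
  [/\ {within `[0, +oo[, continuous phi},
      (forall s t th : R, 0 <= s -> 0 <= t -> 0 <= th <= 1 ->
         phi (th * s + (1 - th) * t) <= th * phi s + (1 - th) * phi t),
      phi 0 = 0,
      (forall t, 0 < t -> 0 < phi t) &
      phi t @[t --> +oo] --> +oo].

Variable lebn : {measure set (n.-tuple R) -> \bar R}.

Local Notation L := (@Leb lebn).
Local Notation T := (LebT lebn).

Definition Lphi_norm (phi : R -> R) (O : set T) (u : T -> R) : \bar R :=
  ereal_inf [set l%:E | l in [set l : R | 0 < l /\
     (\int[L]_(x in O) (phi (`|u x| / l))%:E <= 1)%E]].

Definition Bdot_norm (alpha : R) (phi : R -> R) (O : set T) (u : T -> R)
  : \bar R :=
  ereal_inf [set l%:E | l in [set l : R | 0 < l /\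
     (\int[L]_(x in O) \int[L]_(y in O)
        (phi (`|u x - u y| / (l * edist x y `^ alpha))
          / edist x y ^+ (2 * n))%:E <= 1)%E]].

Definition Lphi (phi : R -> R) (O : set T) : set (T -> R) :=
  [set u : T -> R | measurable_fun O u /\ (Lphi_norm phi O u < +oo)%E].

Definition Bdot (alpha : R) (phi : R -> R) (O : set T) : set (T -> R) :=
  [set u : T -> R | measurable_fun O u /\ (Bdot_norm alpha phi O u < +oo)%E].

Definition Bsp (alpha : R) (phi : R -> R) (O : set T) : set (T -> R) :=
  Lphi phi O `&` Bdot alpha phi O.

Definition L1loc (O : set T) : set (T -> R) :=
  [set u : T -> R | measurable_fun O u /\
     forall K : set T, K `<=` O -> is_compact K ->
       (\int[L]_(x in K) `|u x|%:E < +oo)%E].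

End Defs.
Arguments Leb {R n} lebn.

(* Bsp is Bdot intersected with L^phi, so only Bdot ⊆ L^1_loc needs an argument.
   Take u in Bdot and lambda with the double integral at most 1.  The inner
   integral G(x) = \int_O phi(|u x - u y| / (lambda |x - y|^alpha)) / |x - y|^(2n) dy
   then has finite integral over O, so every box in O contains a point x with
   G(x) < oo; take one on each side of a hyperplane through a point of O.  For y
   in a bounded set at distance at least delta from such an x, the integrand
   dominates c (|u y| - A)^+: since alpha < 0, |x - y|^alpha <= delta^alpha, and
   convexity with phi(0) = 0 gives phi t >= phi 1 (t - 1).  Hence |u| is
   integrable on each half of O cut by the hyperplane, intersected with a cube
   containing the compact set. *)
From Pilot Require Import Defs.
From HB Require Import structures.
From mathcomp Require Import all_boot all_order all_algebra.
From mathcomp Require Import all_classical all_reals all_analysis.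
From mathcomp Require Import ring lra.
Import Order.TTheory GRing.Theory Num.Theory.
Import numFieldNormedType.Exports.
Import Num.Def.
Import measurable_realfun.
Set Implicit Arguments.
Unset Strict Implicit.
Unset Printing Implicit Defensive.
Local Open Scope classical_set_scope.
Local Open Scope ring_scope.

Section YoungFunction.
Variables (R : realType) (phi : R -> R).
Hypothesis phiY : young phi.

Lemma young_gt0 [t : R] : 0 < t -> 0 < phi t.
Proof. by case: phiY => _ _ _ + _; apply. Qed.

Lemma young_ge0 [t : R] : 0 <= t -> 0 <= phi t.
Proof.
case: phiY => _ _ phi0 _ _.
by rewrite le_eqVlt => /orP[/eqP <-|/young_gt0/ltW//]; rewrite phi0.
Qed.

Lemma young_ge_linear [t : R] : 0 <= t -> phi 1 * (t - 1) <= phi t.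
Proof.
move=> t_ge0; have phi1_gt0 := young_gt0 ltr01.
have [t_le1|t_gt1] := lerP t 1.
  have : phi 1 * (t - 1) <= 0 by rewrite pmulr_rle0 //; lra.
  by have := young_ge0 t_ge0; lra.
case: phiY => _ convex phi0 _ _.
have t_gt0 : 0 < t by lra.
have inv_t : 0 <= t^-1 <= 1 by rewrite invr_ge0 ltW //= invf_le1 // ltW.
(* convexity at [1 = t^-1 * t + (1 - t^-1) * 0] *)
have phi1t : phi 1 * t <= phi t.
  have := convex t 0 t^-1 t_ge0 (lexx 0) inv_t.
  by rewrite mulr0 addr0 phi0 mulr0 addr0 mulVf ?gt_eqF // mulrC -ler_pdivlMr.
have : phi 1 * (t - 1) <= phi 1 * t by rewrite ler_wpM2l ?ltW //; lra.
lra.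
Qed.

Lemma powR_antitone_neg (alpha delta d : R) :
  alpha < 0 -> 0 < delta -> delta <= d -> d `^ alpha <= delta `^ alpha.
Proof.
move=> alpha_lt0 delta_gt0 delta_le_d.
have powRN_inv x : x `^ alpha = (x `^ (- alpha))^-1 by rewrite -powRN opprK.
rewrite !powRN_inv lef_pV2 ?posrE ?powR_gt0 //; last lra.
by apply: ge0_ler_powR; rewrite ?nnegrE ?oppr_ge0; lra.
Qed.

Lemma besov_kernel_ge (m : nat) (a b l alpha delta d D : R) :
  0 < l -> alpha < 0 -> 0 < delta -> delta <= d -> d ^+ m <= D ->
  phi 1 / (l * delta `^ alpha * D) * maxr (`|b| - (`|a| + l * delta `^ alpha)) 0
    <= phi (`|a - b| / (l * d `^ alpha)) / d ^+ m.
Proof.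
move=> l_gt0 alpha_lt0 delta_gt0 delta_le_d dm_le_D.
have phi1_gt0 := young_gt0 ltr01.
have dm_gt0 : 0 < d ^+ m by apply: exprn_gt0; lra.
have D_gt0 : 0 < D by lra.
have d_gt0 : 0 < d by lra.
set k := l * delta `^ alpha.
have k_gt0 : 0 < k by rewrite mulr_gt0 // powR_gt0.
set t := `|a - b| / (l * d `^ alpha).
have t_ge0 : 0 <= t by rewrite divr_ge0 // mulr_ge0 ?powR_ge0 // ltW.
have t_ge : `|a - b| / k <= t.
  rewrite /t ler_wpM2l // lef_pV2 ?posrE ?mulr_gt0 ?powR_gt0 //.
  by apply: ler_wpM2l; [exact: ltW|exact: powR_antitone_neg].
apply: (@le_trans _ _ (phi t / D)); last first.
  by apply: ler_wpM2l; [exact: young_ge0|rewrite lef_pV2 ?posrE].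
have [|b_far] := lerP (`|b| - (`|a| + k)) 0.
  by rewrite mulr0 divr_ge0 ?young_ge0 // ltW.
have -> : phi 1 / (k * D) * (`|b| - (`|a| + k))
          = phi 1 * ((`|b| - `|a|) / k - 1) / D.
  by field; rewrite ?gt_eqF.
apply: ler_wpM2r; first by rewrite invr_ge0 ltW.
apply: le_trans (young_ge_linear t_ge0).
apply: ler_wpM2l; first exact: ltW.
rewrite lerD2r; apply: le_trans t_ge.
apply: ler_wpM2r; first by rewrite invr_ge0 ltW.
by rewrite distrC lerB_dist.
Qed.

End YoungFunction.

Section EuclideanDistance.
Variables (R : realType) (n : nat).

Lemma coord_le_edist (x y : n.-tuple R) i : `|tnth x i - tnth y i| <= Defs.edist x y.
Proof.
rewrite /Defs.edist -sqrtr_sqr ler_sqrt; last by apply: sumr_ge0 => j _; exact: sqr_ge0.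
by rewrite (bigD1 i) //= lerDl; apply: sumr_ge0 => j _; exact: sqr_ge0.
Qed.

Lemma edist_expn_le (x y : n.-tuple R) W :
  (forall i, `|tnth x i - tnth y i| <= W) ->
  Defs.edist x y ^+ (2 * n) <= (n%:R * W ^+ 2) ^+ n.
Proof.
move=> coord_le; rewrite exprM /Defs.edist sqr_sqrtr; last first.
  by apply: sumr_ge0 => j _; exact: sqr_ge0.
apply: lerXn2r; rewrite ?nnegrE.
- by apply: sumr_ge0 => j _; exact: sqr_ge0.
- by rewrite mulr_ge0 // sqr_ge0.
have -> : n%:R * W ^+ 2 = \sum_(i < n) W ^+ 2 by rewrite sumr_const card_ord mulr_natl.
apply: ler_sum => i _.
rewrite -real_normK ?num_real //; apply: lerXn2r; rewrite ?nnegrE //.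
exact: le_trans (normr_ge0 _) (coord_le i).
Qed.

End EuclideanDistance.

Section NonnegativeIntegral.
Local Open Scope ereal_scope.
Context d (T : measurableType d) (R : realType) (mu : {measure set T -> \bar R}).

(* No measurability is needed: nonnegative integrals are suprema over simple
   functions below the integrand. *)
Lemma ge0_le_integral_subset (D1 D2 : set T) (f g : T -> \bar R) :
  D1 `<=` D2 -> (forall x, D1 x -> 0 <= f x <= g x) -> (forall x, D2 x -> 0 <= g x) ->
  \int[mu]_(x in D1) f x <= \int[mu]_(x in D2) g x.
Proof.
move=> D12 fg g0; rewrite !ge0_integralE //; last by move=> x /fg /andP[].
apply: ereal_sup_le => _ [h hf <-]; exists h => // x.
apply: le_trans (hf x) _; rewrite /patch; case: ifPn => [/set_mem D1x|_].
  by rewrite mem_set; [case/andP: (fg x D1x)|exact: D12].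
by case: ifPn => // /set_mem /g0.
Qed.

Lemma ge0_integral_lty_exists (D B : set T) (G : T -> \bar R) :
  measurable B -> B `<=` D -> 0 < mu B -> (forall x, D x -> 0 <= G x) ->
  \int[mu]_(x in D) G x < +oo -> exists x, B x /\ G x < +oo.
Proof.
move=> mB BD muB_gt0 G0 G_fin; apply: contrapT => noG.
have Goo x : B x -> G x = +oo.
  move=> Bx; apply/eqP; rewrite eq_le leey leNgt; apply/negP => Gx.
  by apply: noG; exists x.
have : \int[mu]_(x in B) (cst +oo) x <= \int[mu]_(x in D) G x.
  by apply: ge0_le_integral_subset => // x Bx; rewrite Goo ?lexx ?leey.
rewrite integral_cst // gt0_mulye // leye_eq => /eqP G_oo.
by move: G_fin; rewrite G_oo ltxx.
Qed.

Lemma lty_integral_abs_dominated (S D : set T) (u : T -> R) (F : T -> \bar R) (A c : R) :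
  measurable S -> S `<=` D -> measurable_fun S u -> mu S < +oo ->
  (0 < c)%R -> (0 <= A)%R ->
  (forall y, D y -> 0 <= F y) -> \int[mu]_(y in D) F y < +oo ->
  (forall y, S y -> (c * maxr (`|u y| - A) 0)%:E <= F y) ->
  \int[mu]_(y in S) `|u y|%:E < +oo.
Proof.
move=> mS SD u_meas muS_fin c_gt0 A_ge0 F0 F_fin F_ge.
pose v y := (maxr (`|u y| - A) 0)%R.
have v0 y : S y -> 0 <= (v y)%:E by rewrite lee_fin le_max lexx orbT.
have mv : measurable_fun S v.
  apply: measurable_maxr; last exact: measurable_cst.
  apply: measurable_funB; last exact: measurable_cst.
  exact: measurableT_comp.
have u_le : \int[mu]_(y in S) `|u y|%:E <= \int[mu]_(y in S) (A%:E + (v y)%:E).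
  apply: ge0_le_integral => //.
  - by apply/measurable_EFinP; exact: measurableT_comp.
  - by apply: emeasurable_funD; [exact: measurable_cst|exact/measurable_EFinP].
  - by move=> y _; rewrite -EFinD lee_fin -lerBlDl le_max lexx.
have cv_le : c%:E * \int[mu]_(y in S) (v y)%:E <= \int[mu]_(y in D) F y.
  rewrite -ge0_integralZl_EFin //; [|exact/measurable_EFinP|exact: ltW].
  apply: ge0_le_integral_subset => // y Sy.
  apply/andP; split; last exact: F_ge.
  by apply: mule_ge0; [rewrite lee_fin ltW|exact: v0].
apply: (le_lt_trans u_le).
rewrite ge0_integralD //; last exact/measurable_EFinP.
rewrite integral_cst //; apply: lte_add_pinfty; first exact: lte_mul_pinfty.
have : c%:E * \int[mu]_(y in S) (v y)%:E < +oo by exact: le_lt_trans cv_le F_fin.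
apply: contraTT; rewrite -leNgt leye_eq => /eqP ->.
by rewrite muleC gt0_mulye ?lte_fin // ltxx.
Qed.

End NonnegativeIntegral.

Section Tuples.
Variables (R : realType) (n : nat).
Local Notation rowv := (@rowv R n).

Definition cube (M : R) : set (n.-tuple R) := box [tuple - M | _ < n] [tuple M | _ < n].

Lemma cubeP M y : cube M y <-> forall i, `|tnth y i| <= M.
Proof. by split=> yM i; have := yM i; rewrite ?tnth_mktuple ler_norml. Qed.

Lemma rowv_inj : injective rowv.
Proof.
move=> x y /matrixP xy; apply: eq_from_tnth => i.
by have := xy 0 i; rewrite !mxE.
Qed.

Lemma open_cube_sub (O : set (n.-tuple R)) x : open (rowv @` O) -> O x ->
  exists2 e : R, 0 < e & forall y, (forall i, `|tnth x i - tnth y i| < e) -> O y.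
Proof.
move=> openO Ox; have : nbhs (rowv x) (rowv @` O) by apply: openO; exists x.
move=> /nbhs_ballP[e e_gt0 ballO]; exists e => // y xy.
have [|z Oz /rowv_inj <- //] := ballO (rowv y).
by split => // i j; rewrite !mxE; exact: xy.
Qed.

Lemma measurable_coord i (I : interval R) :
  measurable [set y : n.-tuple R | tnth y i \in I].
Proof.
have -> : [set y : n.-tuple R | tnth y i \in I] =
    setT `&` ((fun y : n.-tuple R => tnth y i) @^-1` [set` I]) by rewrite setTI.
by apply: measurable_tnth => //; exact: measurable_itv.
Qed.

Lemma measurable_box (a b : n.-tuple R) : measurable (box a b).
Proof.
have -> : box a b = \bigcap_(i in [set: 'I_n]) [set y | tnth y i \in `[tnth a i, tnth b i]].
  apply/seteqP; split => [y yab i _|y yab i] /=; first by rewrite in_itv /= yab.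
  by have := yab i I; rewrite /= in_itv.
apply: fin_bigcap_measurable; first exact: finite_finset.
by move=> i _; exact: measurable_coord.
Qed.

Definition ratbox (q : {ffun 'I_n -> rat * rat}) : set (n.-tuple R) :=
  box [tuple ratr (q i).1 | i < n] [tuple ratr (q i).2 | i < n].

Lemma ratbox_around (O : set (n.-tuple R)) x : open (rowv @` O) -> O x ->
  exists q, ratbox q `<=` O /\ ratbox q x.
Proof.
move=> openO Ox; have [e e_gt0 cubeO] := open_cube_sub openO Ox.
have : forall i : 'I_n, exists ab : rat * rat,
    tnth x i - e < ratr ab.1 <= tnth x i /\ tnth x i <= ratr ab.2 < tnth x i + e.
  move=> i.
  have [a xa] := @rat_in_itvoo R (tnth x i - e) (tnth x i) ltac:(rewrite gtrBl //).
  have [b xb] := @rat_in_itvoo R (tnth x i) (tnth x i + e) ltac:(rewrite ltrDl //).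
  exists (a, b); move: xa xb; rewrite !in_itv /=.
  by move=> /andP[-> /ltW ->] /andP[/ltW -> ->].
move=> /fin_all_exists[f xf]; exists (finfun f); split => [y yq|i].
  apply: cubeO => i; have := yq i; rewrite !tnth_mktuple ffunE.
  by have := xf i; rewrite ltr_norml; lra.
by rewrite !tnth_mktuple ffunE; have [/andP[_ ->] /andP[-> _]] := xf i.
Qed.

(* An open set is the countable union of the rational boxes it contains. *)
Lemma open_measurable (O : set (n.-tuple R)) : open (rowv @` O) -> measurable O.
Proof.
move=> openO.
pose C k : set (n.-tuple R) := if @unpickle {ffun 'I_n -> rat * rat} k is Some q then
  if pselect (ratbox q `<=` O) then ratbox q else set0 else set0.
have -> : O = \bigcup_k C k.
  apply/seteqP; split => [x Ox|x [k _]]; last first.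
    by rewrite /C; case: unpickle => [q|//]; case: (pselect _) => // qO; exact: qO.
  have [q [qO qx]] := ratbox_around openO Ox.
  by exists (pickle q) => //; rewrite /C pickleK; case: (pselect _).
apply: bigcupT_measurable => k; rewrite /C.
case: unpickle => [q|]; last exact: measurable0.
by case: (pselect (ratbox q `<=` O)) => qO; [exact: measurable_box|exact: measurable0].
Qed.

Lemma mx_entry_le_norm (x : 'rV[R]_n) i : `|x 0 i| <= `|x|.
Proof.
rewrite [X in _ <= X]/Num.norm /= mx_normrE.
exact: (le_bigmax _ (fun ij : 'I_1 * 'I_n => `|x ij.1 ij.2|) (0, i)).
Qed.

Lemma compact_sub_cube (K : set (n.-tuple R)) : is_compact K ->
  exists2 M : R, 0 <= M & K `<=` cube M.
Proof.
move=> /compact_bounded[M0 [_ M0K]]; exists (`|M0| + 1); first by rewrite addr_ge0.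
move=> y Ky; apply/cubeP => i.
have M0lt : `|M0| < `|M0| + 1 by rewrite ltrDl.
have := M0K _ (le_lt_trans (ler_norm M0) M0lt) (rowv y) (ex_intro2 _ _ y Ky erefl).
by apply: le_trans; have := mx_entry_le_norm (rowv y) i; rewrite mxE.
Qed.

End Tuples.

Section LebesgueCompletion.
Variables (R : realType) (n : nat) (lebn : {measure set (n.-tuple R) -> \bar R}).

Lemma Leb_measurable (A : set (n.-tuple R)) : measurable A -> measurable (A : set (LebT lebn)).
Proof. exact: caratheodory_measurable_mu_ext. Qed.

Lemma Leb_box (a b : n.-tuple R) : is_lebesgue_borel lebn ->
  (forall i, tnth a i <= tnth b i) ->
  Leb lebn (box a b) = (\prod_(i < n) (tnth b i - tnth a i))%:E.
Proof.
move=> lebnE ab; rewrite -lebnE //.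
by apply: measurable_mu_extE; exact: measurable_box.
Qed.

End LebesgueCompletion.

Section BdotLocallyIntegrable.
Variables (R : realType) (n : nat) (lebn : {measure set (n.-tuple R) -> \bar R}).
Local Notation T := (LebT lebn).
Local Notation L := (Leb lebn).
Variables (alpha l : R) (phi : R -> R) (O : set (n.-tuple R)) (u : T -> R).
Hypotheses (lebnE : is_lebesgue_borel lebn) (n_gt0 : (0 < n)%N) (alpha_lt0 : alpha < 0).
Hypotheses (phiY : young phi) (nonemptyO : O !=set0) (openO : open (@rowv R n @` O)).
Hypotheses (u_meas : measurable_fun (O : set T) u) (l_gt0 : 0 < l).

Let kernel (x y : T) : \bar R :=
  (phi (`|u x - u y| / (l * Defs.edist x y `^ alpha)) / Defs.edist x y ^+ (2 * n))%:E.
Let section (x : T) : \bar R := \int[L]_(y in O) kernel x y.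

Hypothesis section_int_le1 : (\int[L]_(x in O) section x <= 1)%E.

Let mO : measurable (O : set T) := Leb_measurable lebn (open_measurable openO).

Let kernel_ge0 x y : (0 <= kernel x y)%E.
Proof.
rewrite lee_fin divr_ge0 ?exprn_ge0 ?sqrtr_ge0 // (young_ge0 phiY) //.
by rewrite divr_ge0 // mulr_ge0 ?powR_ge0 // ltW.
Qed.

Let section_ge0 x : (0 <= section x)%E.
Proof. by apply: integral_ge0 => y _; exact: kernel_ge0. Qed.

Let measurable_part M (H : set (n.-tuple R)) :
  measurable H -> measurable (O `&` (cube M `&` H) : set T).
Proof.
move=> mH; apply: measurableI => //; apply: (Leb_measurable lebn).
by apply: measurableI => //; exact: measurable_box.
Qed.

Lemma exists_finite_section (a b : n.-tuple R) :
  (forall i, tnth a i < tnth b i) -> box a b `<=` O ->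
  exists x, box a b x /\ (section x < +oo)%E.
Proof.
move=> ab abO; apply: (ge0_integral_lty_exists (mu := L) (D := O)) => //.
- by apply: (Leb_measurable lebn); exact: measurable_box.
- rewrite [X in (_ < X)%E](Leb_box lebnE) => [|i]; last exact: ltW.
  by rewrite lte_fin; apply: prodr_gt0 => i _; rewrite subr_gt0.
- exact: le_lt_trans section_int_le1 (ltey _).
Qed.

Lemma integrable_far_from_finite_section (x : T) M i delta (H : set (n.-tuple R)) :
  (section x < +oo)%E -> 0 <= M -> 0 < delta -> measurable H ->
  (forall y, H y -> delta <= `|tnth x i - tnth y i|) ->
  (\int[L]_(y in O `&` (cube M `&` H)) `|u y|%:E < +oo)%E.
Proof.
move=> x_fin M_ge0 delta_gt0 mH far.
pose W := M + \sum_j `|tnth x j| + 1.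
have W_gt0 : 0 < W by rewrite /W ltr_wpDl // addr_ge0 // sumr_ge0.
have xyW y : cube M y -> forall j, `|tnth x j - tnth y j| <= W.
  move=> /cubeP yM j; apply: le_trans (ler_normB _ _) _.
  rewrite /W addrC -addrA lerD // (bigD1 j) //= -addrA lerDl.
  by rewrite addr_ge0 // sumr_ge0.
pose D := (n%:R * W ^+ 2) ^+ n.
have D_gt0 : 0 < D by rewrite exprn_gt0 // mulr_gt0 ?ltr0n ?exprn_gt0.
apply: (lty_integral_abs_dominated (mu := L) (D := O) (F := kernel x)
  (A := `|u x| + l * delta `^ alpha) (c := phi 1 / (l * delta `^ alpha * D))) => //.
- exact: measurable_part.
- by apply: measurable_funS u_meas => // y [].
- apply: (@le_lt_trans _ _ (L (cube M))).
    apply: le_measure; last by move=> y [_ []].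
      by rewrite inE; exact: measurable_part.
    by rewrite inE; apply: (Leb_measurable lebn); exact: measurable_box.
  by rewrite Leb_box ?ltey // => j; rewrite !tnth_mktuple; lra.
- by rewrite divr_gt0 ?(young_gt0 phiY) // !mulr_gt0 // powR_gt0.
- by rewrite addr_ge0 // mulr_ge0 ?powR_ge0 // ltW.
- move=> y [_ [yM Hy]]; rewrite /kernel lee_fin.
  apply: besov_kernel_ge => //; last exact: edist_expn_le (xyW y yM).
  exact: le_trans (far y Hy) (coord_le_edist _ _ _).
Qed.

Lemma finite_sections_around (z : n.-tuple R) i : O z ->
  exists2 delta, 0 < delta & exists x1 x2 : T,
    [/\ (section x1 < +oo)%E, (section x2 < +oo)%E,
        tnth x1 i + delta <= tnth z i & tnth z i + delta <= tnth x2 i].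
Proof.
move=> Oz; have [e e_gt0 zO] := open_cube_sub openO Oz.
pose shift s := [tuple tnth z j + s | j < n].
have finite_section_between s t : - (e / 2) <= s -> s < t -> t <= e / 2 ->
    exists x, box (shift s) (shift t) x /\ (section x < +oo)%E.
  move=> es st te; apply: exists_finite_section => [j|y yst].
    by rewrite !tnth_mktuple ltrD2l.
  apply: zO => j; have := yst j; rewrite !tnth_mktuple ltr_norml; lra.
have [x1 [x1B x1_fin]] :=
  finite_section_between (- (e / 2)) (- (e / 4)) (lexx _) ltac:(lra) ltac:(lra).
have [x2 [x2B x2_fin]] :=
  finite_section_between (e / 4) (e / 2) ltac:(lra) ltac:(lra) (lexx _).
exists (e / 4); first lra.
exists x1, x2; split => //.
- by have := x1B i; rewrite !tnth_mktuple; lra.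
- by have := x2B i; rewrite !tnth_mktuple; lra.
Qed.

Lemma integrable_compact (K : set T) : K `<=` O -> is_compact K ->
  (\int[L]_(x in K) `|u x|%:E < +oo)%E.
Proof.
move=> KO cK; have [z Oz] := nonemptyO; pose i0 : 'I_n := Ordinal n_gt0.
have [delta delta_gt0 [x1 [x2 [x1_fin x2_fin x1z zx2]]]] := finite_sections_around i0 Oz.
have [M M_ge0 KM] := compact_sub_cube cK.
pose upper := [set y : n.-tuple R | tnth y i0 \in `[tnth z i0, +oo[].
pose lower := [set y : n.-tuple R | tnth y i0 \in `]-oo, tnth z i0[].
have int_upper : (\int[L]_(y in O `&` (cube M `&` upper)) `|u y|%:E < +oo)%E.
  apply: (integrable_far_from_finite_section (i := i0) (delta := delta) x1_fin) => //.
    exact: measurable_coord.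
  move=> y; rewrite /upper /= in_itv /= andbT => zy.
  by rewrite ler_normr; lra.
have int_lower : (\int[L]_(y in O `&` (cube M `&` lower)) `|u y|%:E < +oo)%E.
  apply: (integrable_far_from_finite_section (i := i0) (delta := delta) x2_fin) => //.
    exact: measurable_coord.
  move=> y; rewrite /lower /= in_itv /= => yz.
  by rewrite ler_normr; lra.
apply: le_lt_trans (ge0_le_integral_subset L (D1 := K)
  (D2 := O `&` (cube M `&` upper) `|` O `&` (cube M `&` lower))
  (f := fun y => `|u y|%:E) (g := fun y => `|u y|%:E) _ _ _) _.
- move=> y Ky; have [zy|yz] := lerP (tnth z i0) (tnth y i0).
    by left; split; [exact: KO|split; [exact: KM|rewrite /upper /= in_itv /= zy]].
  by right; split; [exact: KO|split; [exact: KM|rewrite /lower /= in_itv /= yz]].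
- by move=> y _; rewrite lee_fin normr_ge0 /=.
- by move=> y _.
rewrite ge0_integral_setU //.
- exact: lte_add_pinfty.
- by apply: measurable_part; exact: measurable_coord.
- by apply: measurable_part; exact: measurable_coord.
- apply/measurable_EFinP; apply: measurableT_comp => //.
  by apply: measurable_funS u_meas => // y [[]|[]].
- rewrite disj_set2E; apply/eqP/seteqP; split => // y [[_ [_]]] + [_ [_]].
  by rewrite /upper /lower /= !in_itv /=; lra.
Qed.

End BdotLocallyIntegrable.

Theorem lemma2p2 (R : realType) (n : nat)
  (lebn : {measure set (n.-tuple R) -> \bar R})
  (alpha : R) (phi : R -> R) (O : set (n.-tuple R)) :
  @is_lebesgue_borel R n lebn ->
  (2 <= n)%N -> - n%:R < alpha < 0 -> @young R phi -> @is_domain R n O ->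
  @Bsp R n lebn alpha phi O `<=` @Bdot R n lebn alpha phi O /\
  @Bdot R n lebn alpha phi O `<=` @L1loc R n lebn O.
Proof.
move=> lebnE n_ge2 /andP[_ alpha_lt0] phiY [nonemptyO [openO _]].
split=> [u [] //|u [u_meas Bdot_lty]]; split=> // K KO cK.
have [_ [l [l_gt0 int_le1] _] _] := ereal_inf_lt Bdot_lty.
exact: (integrable_compact lebnE (ltnW n_ge2) alpha_lt0 phiY nonemptyO openO
  u_meas l_gt0 int_le1).
Qed.
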